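(* Let $P$ be a rooted forest on $[n]$ with natural labeling and let $\mathcal{M}^{\hat\partial}$ be the monoid of maps $\mathcal{L}(P)\to\mathcal{L}(P)$ generated by $\hat\partial_1,\dots,\hat\partial_n$. For every $x\in\mathcal{M}^{\hat\partial}$, the set $I_x$ is an upper set of $P$; more precisely, $I_x=\operatorname{Rfactor}(e)$ for some idempotent $e\in\mathcal{M}^{\hat\partial}$.
   Context: A rooted forest is a disjoint union of rooted trees, a rooted tree being a connected finite poset in which each element is covered by at most one element. $\mathcal{L}(P)=\{\pi\in S_n : i\prec j \Rightarrow \pi^{-1}_i<\pi^{-1}_j\}$ in one-line notation. $\pi\tau_i$ ($1\le i<n$) swaps $\pi_i,\pi_{i+1}$ if incomparable and is $\pi$ otherwise; $\partial_j=\tau_j\cdots\tau_{n-1}$; $\pi\hat\partial_i=\pi\partial_{\pi^{-1}_i}$. Maps act on the right, $\pi(xy)=(\pi x)y$; the monoid contains the identity. $\operatorname{im}(x)=\{\pi x:\pi\in\mathcal{L}(P)\}$; $\operatorname{rfactor}(x)$ is the longest word that is a common suffix of all elements of $\operatorname{im}(x)$; $\operatorname{Rfactor}(x)$ is its set of letters; $I_x=\{i\in[n]:\hat\partial_i x=x\}$. An upper set $S$ satisfies $a\in S,\ b\succeq a\Rightarrow b\in S$. *)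

From mathcomp Require Import all_boot.
Set Implicit Arguments. Unset Strict Implicit. Unset Printing Implicit Defensive.

(* A poset on [n] is encoded on 'I_n (labels 0..n-1 instead of 1..n) by a
   boolean relation [le] (le a b  <->  a ≼ b).  Words / permutations in
   one-line notation are sequences of 'I_n; positions are 0-based. *)

Section Defs.
Variable n : nat.
Variable le : rel 'I_n.

Definition lt (a b : 'I_n) : bool := (a != b) && le a b.
Definition incomp (a b : 'I_n) : bool := ~~ le a b && ~~ le b a.

Definition is_poset : Prop :=
  [/\ forall a, le a a,
      forall a b, le a b -> le b a -> a = b
    & forall a b c, le a b -> le b c -> le a c].

Definition covers (a b : 'I_n) : Prop :=
  lt a b /\ forall c, lt a c -> le c b -> c = b.

Definition rooted_forest : Prop :=
  is_poset /\ forall a b c, covers a b -> covers a c -> b = c.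

Definition natural_labeling : Prop := forall a b : 'I_n, lt a b -> (a < b)%N.

Definition linext (w : seq 'I_n) : Prop :=
  perm_eq w (enum 'I_n) /\
  forall i j, lt i j -> (index i w < index j w)%N.

(* tau_k (0-based k): swap positions k, k+1 if their entries are incomparable *)
Definition tau (k : nat) (w : seq 'I_n) : seq 'I_n :=
  match drop k w with
  | a :: b :: r => if incomp a b then take k w ++ b :: a :: r else w
  | _ => w
  end.

(* partial_j (0-based j) = tau_j tau_{j+1} ... tau_{n-2}, acting on the right *)
Definition dpart (j : nat) (w : seq 'I_n) : seq 'I_n :=
  foldl (fun w k => tau k w) w (iota j (n.-1 - j)).

(* hat partial_i : pi |-> pi partial_{pi^{-1}_i} *)
Definition hatd (i : 'I_n) (w : seq 'I_n) : seq 'I_n := dpart (index i w) w.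

(* An element of the monoid generated by the hatd_i is given by a word
   s = [:: i1; ...; ik] in the generators, denoting hatd_i1 ... hatd_ik
   (maps act on the right: apply hatd_i1 first). *)
Definition act (s : seq 'I_n) (w : seq 'I_n) : seq 'I_n :=
  foldl (fun w i => hatd i w) w s.

(* equality of monoid elements = equality as maps L(P) -> L(P) *)
Definition meq (s t : seq 'I_n) : Prop :=
  forall w, linext w -> act s w = act t w.

Definition idem_elt (s : seq 'I_n) : Prop := meq (s ++ s) s.

(* I_x = { i | hatd_i x = x } *)
Definition Iset (s : seq 'I_n) (i : 'I_n) : Prop := meq (i :: s) s.

Definition common_suffix (s : seq 'I_n) (v : seq 'I_n) : Prop :=
  forall w, linext w -> suffix v (act s w).

Definition is_rfactor (s : seq 'I_n) (v : seq 'I_n) : Prop :=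
  common_suffix s v /\ forall v', common_suffix s v' -> (size v' <= size v)%N.

Definition Rfactor (s : seq 'I_n) (i : 'I_n) : Prop :=
  exists v, is_rfactor s v /\ i \in v.

Definition upper_set (S : 'I_n -> Prop) : Prop :=
  forall a b, S a -> le a b -> S b.

End Defs.

From mathcomp Require Import all_boot zify boolp.
Set Implicit Arguments. Unset Strict Implicit. Unset Printing Implicit Defensive.

(* In a rooted forest with a natural labeling the elements above [i] form a
   chain.  The map [hatd i] keeps the relative order of the letters not above
   [i] and, among the letters above [i], moves the first one to the end; hence
   [hatd i] iterated [n] times sends [w] to its letters not above [i], in their
   order in [w], followed by that chain.  If [i] is in [I_x] and [i <= j], this
   gives [hatd_j hatd_i^n = hatd_i^n], so [hatd_j x = hatd_j hatd_i^n x = x].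
   The product [e] of the [hatd_i^n], [i] in [I_x], sends [w] to its letters
   outside [I_x] followed by a fixed word [sg] on [I_x]; so [e] is idempotent
   and [sg] is a common suffix of [im e].  A longer one would give a letter [d]
   outside [I_x] that is last among those letters in every linear extension;
   then [hatd_d] does not change what [e] retains, forcing [d] into [I_x].
   Hence [rfactor e = sg], whose letters are exactly [I_x]. *)

Section SeqFacts.
Variable T : eqType.
Implicit Types (p : pred T) (s u v : seq T) (x y a b : T).

Lemma index_swap s a b r x y :
  uniq (s ++ a :: b :: r) ->
  index x (s ++ a :: b :: r) < index y (s ++ a :: b :: r) ->
  ~~ ((x == a) && (y == b)) ->
  index x (s ++ b :: a :: r) < index y (s ++ b :: a :: r).
Proof.
move=> Hu.
have Hab : a != b.
  by move: Hu; rewrite cat_uniq /= inE; case/and3P => _ _ /andP [/norP [] ].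
rewrite !index_cat.
case Hx: (x \in s); case Hy: (y \in s) => //.
- move=> _ _; rewrite (leq_trans (_ : index x s < size s)) ?leq_addr ?index_mem ?Hx //.
- move=> H; exfalso; move: H; have := (index_mem y s); rewrite Hy => H1 H2.
  by have := leq_trans H2 (ltnW H1); rewrite ltnNge leq_addr.
- rewrite !ltn_add2l /=.
  case: (eqVneq a x) => [<-|Hax]; case: (eqVneq b x) => [Ebx|Hbx];
  case: (eqVneq a y) => [Eay|Hay]; case: (eqVneq b y) => [Eby|Hby] //=;
  rewrite ?eqxx ?Ebx ?Eby ?Eay //=; try by subst; rewrite eqxx in Hab.
all: by case: ifP.
Qed.

Lemma rem_cat_cons x s1 s2 : x \notin s1 -> rem x (s1 ++ x :: s2) = s1 ++ s2.
Proof.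
elim: s1 => [|y s1 IH] /=; first by rewrite eqxx.
by rewrite inE negb_or eq_sym => /andP [/negbTE -> /IH ->].
Qed.

Lemma rem_catl x s1 s2 : x \in s1 -> rem x (s1 ++ s2) = rem x s1 ++ s2.
Proof.
elim: s1 => [//|y s1 IH] /=; rewrite inE eq_sym.
by case: eqP => // _ /IH ->.
Qed.

Lemma map_filter_pred p s : map p (filter p s) = nseq (count p s) true.
Proof. by elim: s => [|a s IH] //=; case E: (p a) => /=; rewrite ?E IH. Qed.

Lemma map_filter_predC p s : map p (filter (predC p) s) = nseq (count (predC p) s) false.
Proof. by elim: s => [|a s IH] //=; case E: (p a) => /=; rewrite ?E IH. Qed.

Lemma filter_filter_disjoint p q s : (forall x, p x -> ~~ q x) ->
  filter q (filter p s) = [::].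
Proof.
move=> Hpq; elim: s => //= x s IH.
by case: ifP => Hpx //=; rewrite (negbTE (Hpq x Hpx)).
Qed.

Lemma eq_from_filters p u v : map p u = map p v ->
  filter p u = filter p v -> filter (predC p) u = filter (predC p) v -> u = v.
Proof.
elim: u v => [|a u IH] [|b v] //= [<- Hm].
case: (p a) => /=.
  by move=> [-> Hf] Hg; rewrite (IH v Hm Hf Hg).
by move=> Hf [-> Hg]; rewrite (IH v Hm Hf Hg).
Qed.

Lemma suffix_comparable s1 s2 s : suffix s1 s -> suffix s2 s ->
  size s1 <= size s2 -> suffix s1 s2.
Proof.
rewrite !suffixE => /eqP E1 /eqP E2 le12.
have := size_drop (size s - size s2) s; rewrite E2 => S2.
apply/eqP; rewrite -[RHS]E1 -[in drop _ s2]E2 drop_drop E2; congr drop; lia.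
Qed.

End SeqFacts.

(* The effect of [hatd i] on the sequence of truth values of [le i]. *)
Definition true_to_end (s : seq bool) : seq bool := rcons (rem true s) true.

Lemma mem_true_count (s : seq bool) : (true \in s) = (0 < count id s).
Proof. by rewrite -has_pred1 has_count; congr (0 < _); apply: eq_count; case. Qed.

Lemma iter_rem_true k (s : seq bool) : k <= count id s ->
  count id (iter k (rem true) s) = count id s - k /\
  size (iter k (rem true) s) = size s - k.
Proof.
elim: k => [|k IH] /= Hk; first by rewrite !subn0.
have [IHc IHs] := IH (ltnW Hk).
have Htrue : true \in iter k (rem true) s by rewrite mem_true_count; lia.
by rewrite count_rem size_rem // Htrue IHc IHs; split; lia.
Qed.

Lemma iter_true_to_end k s : 0 < count id s <= k ->
  iter k true_to_end s = nseq (size s - count id s) false ++ nseq (count id s) true.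
Proof.
move=> /andP [c_gt0 c_le_k].
have partial j : j <= count id s ->
    iter j true_to_end s = iter j (rem true) s ++ nseq j true.
  elim: j => [|j IH] Hj /=; first by rewrite cats0.
  have [Hc _] := iter_rem_true (ltnW Hj).
  have Htrue : true \in iter j (rem true) s by rewrite mem_true_count; lia.
  by rewrite /true_to_end IH ?(ltnW Hj) // rem_catl // -cats1 -catA -(nseqD j 1) addn1.
have [Hc Hs] := iter_rem_true (leqnn (count id s)).
have Hfalse : iter (count id s) (rem true) s = nseq (size s - count id s) false.
  rewrite -Hs; move: Hc; rewrite subnn.
  by elim: (iter _ _ _) => [|[] t IHt] //= /IHt {1}->.
rewrite -(subnK c_le_k) iterD partial // Hfalse.
elim: (k - _) => //= m ->.
rewrite /true_to_end -(prednK c_gt0) /= rem_cat_cons ?mem_nseq ?andbF //.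
by rewrite -cats1 -catA -(nseqD _ 1) addn1.
Qed.

Section LinearExtensions.
Variable n : nat.
Variable le : rel 'I_n.
Hypothesis le_poset : is_poset le.

Let le_refl a : le a a. Proof. by case: le_poset. Qed.
Let le_anti a b : le a b -> le b a -> a = b.
Proof. by case: le_poset => _ H _; apply: H. Qed.
Let le_trans a b c : le a b -> le b c -> le a c.
Proof. by case: le_poset => _ _ H; apply: H. Qed.

Lemma linext_uniq w : linext le w -> uniq w.
Proof. by case=> /perm_uniq -> _; exact: enum_uniq. Qed.

Lemma linext_size w : linext le w -> size w = n.
Proof. by case=> /perm_size -> _; rewrite size_enum_ord. Qed.

Lemma linext_mem w x : linext le w -> x \in w.
Proof. by case=> /perm_mem -> _; rewrite mem_enum. Qed.

Lemma linext_pairwise w : linext le w -> pairwise (fun x y => ~~ lt le y x) w.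
Proof.
move=> Hw; have Hu := linext_uniq Hw.
case Ew: w => [//|x0 w']; rewrite -Ew.
apply/(pairwiseP x0) => a b Ha Hb Hab; apply/negP => /(proj2 Hw).
by rewrite !index_uniq // ltnNge (ltnW Hab).
Qed.

Lemma tau_linext k w : linext le w -> linext le (tau le k w).
Proof.
move=> Hw; have Hu := linext_uniq Hw; case: Hw => Hp Ho.
rewrite /tau; case E: (drop k w) => [|a [|b r]]; try by split.
case: ifP => Hinc; last by split.
have Ew : w = take k w ++ [:: a, b & r] by rewrite -E cat_take_drop.
split.
  apply: perm_trans Hp; rewrite {2}Ew perm_cat2l.
  by apply/permP => q /=; rewrite !addnA (addnC (q b)).
move=> x y Hxy; apply: index_swap; rewrite -?Ew; [exact: Hu | exact: Ho |].
apply/negP => /andP [/eqP Ex /eqP Ey]; subst x y.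
by move: Hxy Hinc; rewrite /lt /incomp => /andP [_ ->].
Qed.

Lemma hatd_linext i w : linext le w -> linext le (hatd le i w).
Proof.
rewrite /hatd /dpart; move: (iota _ _) => ks.
by elim: ks w => [|k ks IH] w Hw //=; exact/IH/tau_linext.
Qed.

Lemma act_linext s w : linext le w -> linext le (act le s w).
Proof. by rewrite /act; elim: s w => [|k s IH] w Hw //=; exact/IH/hatd_linext. Qed.

Lemma iter_hatd_linext k i w : linext le w -> linext le (iter k (hatd le i) w).
Proof. by elim: k => //= k IH Hw; exact/hatd_linext/IH. Qed.

Fixpoint bubble (a : 'I_n) (r : seq 'I_n) : seq 'I_n :=
  if r is b :: r' then
    if incomp le a b then b :: bubble a r' else a :: bubble b r'
  else [:: a].

Lemma foldl_tau_bubble m : forall p a r, size r = m ->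
  foldl (fun w k => tau le k w) (p ++ a :: r) (iota (size p) m) = p ++ bubble a r.
Proof.
elim: m => [|m IH] p a [|b r] //= [Hs].
rewrite /tau drop_size_cat // take_size_cat //.
case: ifP => _.
  by rewrite -cat_rcons -(size_rcons p b) IH // cat_rcons.
by rewrite -cat_rcons -(size_rcons p a) IH // cat_rcons.
Qed.

Lemma hatd_pivot i p r : i \notin p -> size (p ++ i :: r) = n ->
  hatd le i (p ++ i :: r) = p ++ bubble i r.
Proof.
move=> Hip Hsize; rewrite /hatd /dpart index_pivot //.
have -> : n.-1 - size p = size r by move: Hsize; rewrite size_cat /=; lia.
exact: foldl_tau_bubble.
Qed.

Lemma linext_pivot i w : linext le w ->
  exists p r, [/\ w = p ++ i :: r, i \notin p &
                  pairwise (fun x y => ~~ lt le y x) (p ++ i :: r)].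
Proof.
move=> Hw; exists (take (index i w) w), (drop (index i w).+1 w).
have Ew : w = take (index i w) w ++ i :: drop (index i w).+1 w.
  by rewrite -drop_index ?cat_take_drop ?linext_mem.
split => //; last by move: (linext_pairwise Hw); rewrite {1}Ew.
by move: (linext_uniq Hw); rewrite {1}Ew cat_uniq /= => /and3P [_ /norP []].
Qed.

Lemma enum_linext : natural_labeling le -> linext le (enum 'I_n).
Proof. by move=> Hnat; split => // x y /Hnat; rewrite !index_enum_ord. Qed.

Section Forest.
Hypothesis le_forest : forall a b c, covers le a b -> covers le a c -> b = c.
Hypothesis le_natural : natural_labeling le.

Lemma lt_covers i a : lt le i a -> exists2 c, covers le i c & le c a.
Proof.
move=> Hia; pose P := [pred c | lt le i c && le c a].
have Pa : P a by rewrite /= Hia le_refl.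
case: (@arg_minnP _ a P val Pa) => c /andP [Hic Hca] Hmin.
exists c => //; split => // d Hid Hdc; case: (eqVneq d c) => // Hne; exfalso.
have := Hmin d; rewrite inE Hid (le_trans Hdc Hca) => /(_ isT).
by have := le_natural (introT andP (conj Hne Hdc)); rewrite ltnNge => /negP.
Qed.

(* Both [a] and [b] lie above the unique cover of [i], whose label is larger. *)
Lemma le_total_above i a b : le i a -> le i b -> le a b || le b a.
Proof.
have [k Hk] : exists k, n - i <= k by exists (n - i).
elim: k i Hk => [|k IH] i Hk Hia Hib; first by have := ltn_ord i; lia.
case: (eqVneq i a) => [<-|Hne_ia]; first by rewrite Hib.
case: (eqVneq i b) => [<-|Hne_ib]; first by rewrite Hia orbT.
have [c Hc Hca] := lt_covers (introT andP (conj Hne_ia Hia)).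
have [c' Hc' Hcb] := lt_covers (introT andP (conj Hne_ib Hib)).
rewrite -(le_forest Hc Hc') in Hcb.
by apply: (IH c) => //; have := le_natural (proj1 Hc); lia.
Qed.

Lemma le_above_incomp i a b : le i a -> ~~ lt le b a -> le i b = ~~ incomp le a b.
Proof.
move=> Hia Hba; rewrite /incomp negb_and !negbK.
case Hab: (le a b); first by rewrite (le_trans Hia Hab).
case Hba': (le b a) => /=.
  by move: Hba; rewrite /lt Hba' andbT negbK => /eqP ->.
apply/negP => Hib; have := le_total_above Hia Hib.
by rewrite Hab Hba'.
Qed.

Section Bubble.
Variable i : 'I_n.

Lemma filter_bubble (T : pred 'I_n) a r :
  pairwise (fun x y => ~~ lt le y x) (a :: r) -> le i a ->
  (forall x, T x -> ~~ le i x) -> filter T (bubble a r) = filter T (a :: r).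
Proof.
move=> + + HT; elim: r a => [//|b r IH] a /=.
move=> /andP [/andP [Hba Har] /andP [Hbr Hr]] Hia.
have HTa : T a = false by apply/negbTE/negP => /HT; rewrite Hia.
have := le_above_incomp Hia Hba; case: ifP => Hinc /= Hib.
  by rewrite IH /= ?Har ?Hr // HTa.
by rewrite IH /= ?Hbr ?Hr ?Hib // HTa.
Qed.

Lemma map_bubble a r : pairwise (fun x y => ~~ lt le y x) (a :: r) -> le i a ->
  map (le i) (bubble a r) = rcons (map (le i) r) true.
Proof.
elim: r a => [|b r IH] a /=; first by move=> _ ->.
move=> /andP [/andP [Hba Har] /andP [Hbr Hr]] Hia.
have := le_above_incomp Hia Hba; case: ifP => Hinc /= Hib.
  by rewrite IH /= ?Har ?Hr // Hib.
by rewrite IH /= ?Hbr ?Hr ?Hib // Hia.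
Qed.

End Bubble.

Lemma hatd_filter i w (T : pred 'I_n) : linext le w ->
  (forall x, T x -> ~~ le i x) -> filter T (hatd le i w) = filter T w.
Proof.
move=> Hw HT; have [p [r [Ew Hip Hpw]]] := linext_pivot i Hw.
have Hsize : size (p ++ i :: r) = n by rewrite -Ew linext_size.
rewrite Ew hatd_pivot // !filter_cat (filter_bubble (i := i)) //.
by move: Hpw; rewrite pairwise_cat => /and3P [].
Qed.

Lemma hatd_mask i w : linext le w ->
  map (le i) (hatd le i w) = true_to_end (map (le i) w).
Proof.
move=> Hw; have [p [r [Ew Hip Hpw]]] := linext_pivot i Hw.
move: Hpw; rewrite pairwise_cat => /and3P [Hpir _ Hir].
have Hp : ~~ has (le i) p.
  apply/hasPn => x Hx; have := allrelP Hpir x i Hx (mem_head _ _).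
  rewrite /lt negb_and negbK => /orP [/eqP Eix|//].
  by move: Hip; rewrite Eix Hx.
have Hsize : size (p ++ i :: r) = n by rewrite -Ew linext_size.
rewrite Ew hatd_pivot // /true_to_end !map_cat (map_bubble (i := i)) ?le_refl //=.
rewrite le_refl rem_cat_cons ?rcons_cat //.
by apply: contra Hp => /mapP [x Hx Ex]; apply/hasP; exists x; rewrite -?Ex.
Qed.

Lemma filter_le_linext i w : linext le w ->
  filter (le i) w = filter (le i) (enum 'I_n).
Proof.
have sorted_above u : linext le u -> pairwise le (filter (le i) u).
  move=> Hu; apply: (sub_in_pairwise (P := le i)); last first.
  - exact/pairwise_filter/linext_pairwise.
  - exact: filter_all.
  move=> x y Hix Hiy; rewrite /lt negb_and negbK => /orP [/eqP -> //|Hyx].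
  by have := le_total_above Hix Hiy; rewrite (negbTE Hyx) orbF.
move=> Hw; apply: (pairwise_eq (r := le)).
- by move=> a b /andP []; apply: le_anti.
- exact: sorted_above.
- exact/sorted_above/enum_linext.
apply: perm_filter; case: Hw => Hp _; exact: Hp.
Qed.

Lemma iter_hatd_filter k i w (T : pred 'I_n) : linext le w ->
  (forall x, T x -> ~~ le i x) -> filter T (iter k (hatd le i) w) = filter T w.
Proof.
move=> Hw HT; elim: k => //= k IH.
by rewrite hatd_filter ?IH //; apply: iter_hatd_linext.
Qed.

(* On the mask of letters above [i], each [hatd i] moves the first [true] to
   the end, so after [n] steps the letters above [i] form a final block, whose
   order is forced since they form a chain. *)
Lemma iter_hatd i w : linext le w ->
  iter n (hatd le i) w = filter (predC (le i)) w ++ filter (le i) (enum 'I_n).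
Proof.
move=> Hw; have Hw' := iter_hatd_linext n i Hw.
have mask k : map (le i) (iter k (hatd le i) w) = iter k true_to_end (map (le i) w).
  by elim: k => //= k <-; rewrite hatd_mask //; apply: iter_hatd_linext.
have Hcount : count (le i) w = count (le i) (enum 'I_n).
  by case: Hw => /permP ->.
have Hcount_pos : 0 < count (le i) w.
  by rewrite -has_count; apply/hasP; exists i; rewrite ?linext_mem.
apply: (eq_from_filters (p := le i)).
- have Ecount : count id (map (le i) w) = count (le i) w by rewrite count_map.
  rewrite mask iter_true_to_end Ecount ?size_map ?linext_size //; last first.
    by rewrite Hcount_pos /= -{2}(linext_size Hw) count_size.
  rewrite map_cat map_filter_predC map_filter_pred -Hcount; congr (nseq _ _ ++ _).
  have := count_predC (le i) w; rewrite (linext_size Hw).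
  by move/(congr1 (subn^~ (count (le i) w))); rewrite addKn => <-.
- rewrite filter_cat filter_id (filter_le_linext _ Hw').
  by rewrite (filter_filter_disjoint (p := predC (le i))).
- rewrite filter_cat filter_id iter_hatd_filter //.
  by rewrite (filter_filter_disjoint (p := le i)) ?cats0 // => x /= ->.
Qed.

Lemma act_cat s t w : act le (s ++ t) w = act le t (act le s w).
Proof. by rewrite /act foldl_cat. Qed.

Lemma act_nseq k i w : act le (nseq k i) w = iter k (hatd le i) w.
Proof. by rewrite /act; elim: k w => // k IH w; rewrite iterSr /= IH. Qed.

Lemma Iset_word x s w : (forall a, a \in s -> Iset le x a) -> linext le w ->
  act le x (act le s w) = act le x w.
Proof.
elim: s w => [//|a s IH] w Hs Hw.
rewrite [act le (a :: s) w]/act /= -/(act le s _) IH.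
- exact/(Hs a (mem_head _ _)).
- by move=> b Hb; apply: Hs; rewrite inE Hb orbT.
exact: hatd_linext.
Qed.

Lemma Iset_upper x : upper_set le (Iset le x).
Proof.
have Iset_iter i k w : Iset le x i -> linext le w ->
    act le x (iter k (hatd le i) w) = act le x w.
  move=> Hi Hw; rewrite -act_nseq Iset_word // => a.
  by rewrite mem_nseq => /andP [_ /eqP ->].
move=> i j Hi Hij w Hw; rewrite /= -/(act le x _).
rewrite -(Iset_iter i n _ Hi (hatd_linext j Hw)) -[RHS](Iset_iter i n _ Hi Hw).
rewrite !iter_hatd //; last exact: hatd_linext.
congr (act le x (_ ++ _)); apply: hatd_filter => // y /=.
by apply: contra => Hjy; exact: le_trans Hij Hjy.
Qed.

Definition block_word (ss : seq 'I_n) : seq 'I_n := flatten [seq nseq n s | s <- ss].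

Definition above (ss : seq 'I_n) (y : 'I_n) : bool := has (le^~ y) ss.

Lemma act_block_word ss : exists sg, all (above ss) sg /\ forall w, linext le w ->
  act le (block_word ss) w = filter (predC (above ss)) w ++ sg.
Proof.
elim: ss => [|s ss [sg [Hall IH]]].
  by exists [::]; split => // w _; rewrite cats0 -[LHS]filter_predT.
exists (filter (predC (above ss)) (filter (le s) (enum 'I_n)) ++ sg); split.
  rewrite all_cat (sub_all _ Hall) ?andbT => [|y]; last first.
    by rewrite /above /= => ->; rewrite orbT.
  by apply/allP => y; rewrite !mem_filter /above /= => /and3P [_ ->].
move=> w Hw; rewrite /block_word /= act_cat act_nseq IH; last exact: iter_hatd_linext.
rewrite iter_hatd // filter_cat catA -filter_predI; congr ((_ ++ _) ++ _).
by apply: eq_filter => y; rewrite /above /= negb_or andbC.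
Qed.

Lemma hatd_filter_last (T : pred 'I_n) d :
  (forall w, linext le w -> suffix [:: d] (filter T w)) ->
  forall w, linext le w -> filter T (hatd le d w) = filter T w.
Proof.
move=> Hlast w Hw; pose T' := [pred y | T y && (y != d)].
have filter_rcons_last u : linext le u -> filter T u = rcons (filter T' u) d.
  move=> Hu; have /suffixP [q Eq] := Hlast u Hu.
  have : uniq (filter T u) by exact/filter_uniq/linext_uniq.
  rewrite Eq cat_uniq /= andbT orbF => /andP [_ Hdq].
  rewrite -cats1; congr (_ ++ _); apply/esym.
  rewrite (eq_filter (a2 := predI (predC1 d) T)) => [|y]; last by rewrite /= andbC.
  rewrite filter_predI Eq filter_cat /= eqxx cats0; apply/all_filterP/allP => y Hy /=.
  by apply/eqP => Eyd; move: Hdq; rewrite -Eyd Hy.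
have Hd : all (fun y => ~~ lt le d y) (filter T' w).
  have := pairwise_filter T (linext_pairwise Hw).
  by rewrite (filter_rcons_last w Hw) pairwise_rcons => /andP [].
rewrite (filter_rcons_last w Hw) (filter_rcons_last _ (hatd_linext d Hw)).
congr rcons.
apply: hatd_filter => // y /andP [Hy Hyd].
have := allP Hd y; rewrite mem_filter /= Hy Hyd linext_mem // => /(_ isT).
by rewrite /lt eq_sym Hyd.
Qed.

Section ShapedWord.
Variables (U : pred 'I_n) (e sg : seq 'I_n).
Hypothesis sg_in_U : all U sg.
Hypothesis act_shape : forall w, linext le w -> act le e w = filter (predC U) w ++ sg.

Lemma shape_idem : idem_elt le e.
Proof.
have sgU : filter (predC U) sg = [::].
  by apply/eqP/negPn; rewrite -has_filter has_predC sg_in_U.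
move=> w Hw; rewrite act_cat (act_shape (act_linext e Hw)) act_shape //.
by rewrite filter_cat filter_id sgU cats0.
Qed.

Lemma shape_common_suffix : common_suffix le e sg.
Proof. by move=> w Hw; rewrite act_shape // suffix_suffix. Qed.

Lemma mem_shape y : U y -> y \in sg.
Proof.
have HW0 := enum_linext le_natural.
move=> Uy; have := linext_mem y (act_linext e HW0).
by rewrite act_shape // mem_cat mem_filter /= Uy.
Qed.

(* A common suffix longer than [sg] would exhibit a letter outside [U] that
   comes last among the letters outside [U] in every linear extension. *)
Hypothesis U_last_closed : forall d,
  (forall w, linext le w -> suffix [:: d] (filter (predC U) w)) -> U d.

Lemma shape_common_suffix_size v : common_suffix le e v -> size v <= size sg.
Proof.
move=> Hv; rewrite leqNgt; apply/negP => Hsize.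
have HW0 := enum_linext le_natural.
have /suffixP [v1 Ev] : suffix sg v.
  exact: suffix_comparable (shape_common_suffix HW0) (Hv _ HW0) (ltnW Hsize).
case/lastP: v1 Ev => [|p d] Ev; first by move: Hsize; rewrite Ev ltnn.
have Hd : forall w, linext le w -> suffix [:: d] (filter (predC U) w).
  move=> w Hw; have := Hv w Hw; rewrite act_shape // Ev suffix_catl // eqxx /=.
  by apply: suffix_trans; rewrite -cats1 suffix_suffix.
have := suffix1s (Hd _ HW0); rewrite mem_filter => /andP [/negP nUd _].
exact/nUd/U_last_closed.
Qed.

Lemma shape_rfactor : is_rfactor le e sg.
Proof. by split; [exact: shape_common_suffix | exact: shape_common_suffix_size]. Qed.

Lemma Rfactor_shape i : Rfactor le e i <-> U i.
Proof.
split; last by move=> Ui; exists sg; split; [exact: shape_rfactor | exact: mem_shape].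
move=> [v [[Hv Hmax] Hi]].
have HW0 := enum_linext le_natural.
have Hsize : size v = size sg.
  apply/eqP; rewrite eqn_leq shape_common_suffix_size // Hmax //.
  exact: shape_common_suffix.
have /suffixP [v1 Ev] :=
  suffix_comparable (Hv _ HW0) (shape_common_suffix HW0) (eq_leq Hsize).
have Ev1 : v1 = [::].
  apply/nilP; move: (congr1 size Ev); rewrite size_cat Hsize /nilp.
  by move/eqP; rewrite -{1}[size sg]add0n eqn_add2r eq_sym.
by move: Hi; rewrite -[v]cat0s -Ev1 -Ev => /(allP sg_in_U).
Qed.

End ShapedWord.

Section IsetIdempotent.
Variable x : seq 'I_n.

Definition Iset_pred : pred 'I_n := fun y => `[< Iset le x y >].

Definition Iset_block : seq 'I_n := block_word (enum Iset_pred).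

Definition Iset_tail : seq 'I_n := filter Iset_pred (act le Iset_block (enum 'I_n)).

Lemma act_Iset_block w : linext le w ->
  act le Iset_block w = filter (predC Iset_pred) w ++ Iset_tail.
Proof.
have above_Iset : above (enum Iset_pred) =1 Iset_pred.
  move=> y; apply/hasP/asboolP => [[a]|Hy]; last first.
    by exists y; [rewrite mem_enum; exact/asboolP | exact: le_refl].
  by rewrite mem_enum => /asboolP Ha Hay; exact: Iset_upper Ha Hay.
have [sg [Hsg Hact]] := act_block_word (enum Iset_pred).
have {}Hact v : linext le v -> act le Iset_block v = filter (predC Iset_pred) v ++ sg.
  move=> Hv; rewrite Hact // (eq_filter (a2 := predC Iset_pred)) // => y /=.
  by rewrite above_Iset.
have -> : Iset_tail = sg.
  rewrite /Iset_tail (Hact _ (enum_linext le_natural)) filter_cat.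
  rewrite filter_filter_disjoint ?cat0s.
    by apply/all_filterP; rewrite -(eq_all above_Iset).
  by move=> y /negbTE ->.
exact: Hact.
Qed.

Lemma Iset_last_closed d :
  (forall w, linext le w -> suffix [:: d] (filter (predC Iset_pred) w)) ->
  Iset_pred d.
Proof.
move=> Hlast; apply/asboolP => w Hw; rewrite /= -/(act le x _).
have Hx v : linext le v -> act le x (act le Iset_block v) = act le x v.
  apply: Iset_word => a /flattenP [_ /mapP [b Hb ->]].
  by rewrite mem_nseq => /andP [_ /eqP ->]; move: Hb; rewrite mem_enum => /asboolP.
have Hw' := hatd_linext d Hw.
by rewrite -(Hx _ Hw') -(Hx _ Hw) !act_Iset_block // (hatd_filter_last Hlast).
Qed.

End IsetIdempotent.

End Forest.

End LinearExtensions.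

Theorem lemma6p8 (n : nat) (le : rel 'I_n)
  (Hforest : rooted_forest le) (Hnat : natural_labeling le)
  (x : seq 'I_n) :
  upper_set le (Iset le x) /\
  exists e : seq 'I_n, idem_elt le e /\
    forall i : 'I_n, Iset le x i <-> Rfactor le e i.
Proof.
case: Hforest => Hposet Hcover.
split; first exact: Iset_upper.
have Hact := act_Iset_block Hposet Hcover Hnat x.
have tail_Iset : all (Iset_pred le x) (Iset_tail le x) by exact: filter_all.
exists (Iset_block le x); split; first exact: shape_idem tail_Iset Hact.
move=> i; rewrite (Rfactor_shape Hnat tail_Iset Hact); first exact: (rwP (asboolP _)).
exact: Iset_last_closed.
Qed.
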